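(* For any integers $n\ge1$ and $\lambda\ge1$, the minimum cost of a solution of the TBI problem with time bound $\lambda$ on a path with $n$ nodes all of which have threshold $1$ is $\lceil n/(2\lambda+1)\rceil$.
   Context: Influence model: a network is a graph $G=(V,E)$; $N(v)$ is the neighbourhood of $v$. Thresholds $t:V\to\{1,2,\dots\}$. An incentive function is $p:V\to\{0,1,2,\dots\}$ with $0\le p(v)\le t(v)$, of cost $\sum_v p(v)$. The influence process: $\mathsf{Influenced}[p,0]=\{v: p(v)=t(v)\}$ and, for $\ell>0$, $\mathsf{Influenced}[p,\ell]=\mathsf{Influenced}[p,\ell-1]\cup\{v: |N(v)\cap \mathsf{Influenced}[p,\ell-1]|\ge t(v)-p(v)\}$. The TBI problem with time bound $\lambda$: find $p$ of minimum cost with $\mathsf{Influenced}[p,\lambda]=V$. A path on $n$ nodes has nodes $0,\dots,n-1$ and edges $\{i,i+1\}$, $0\le i\le n-2$. *)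

From mathcomp Require Import all_boot.
Set Implicit Arguments. Unset Strict Implicit. Unset Printing Implicit Defensive.

Definition path_adj (n : nat) : rel 'I_n :=
  fun i j => (i.+1 == j :> nat) || (j.+1 == i :> nat).

Definition nbhd (T : finType) (adj : rel T) (v : T) : {set T} := [set u | adj v u].

Fixpoint influenced (T : finType) (adj : rel T) (t p : T -> nat) (l : nat)
  : {set T} :=
  match l with
  | 0 => [set v | p v == t v]
  | l'.+1 =>
      let I := influenced adj t p l' in
      I :|: [set v | t v - p v <= #|nbhd adj v :&: I|]
  end.

Definition incentive (T : finType) (t p : T -> nat) : Prop := forall v, p v <= t v.

Definition cost (T : finType) (p : {ffun T -> nat}) : nat := \sum_(v : T) p v.

Definition TBI_solution (T : finType) (adj : rel T) (t : T -> nat) (lam : nat)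
  (p : {ffun T -> nat}) : Prop :=
  incentive t p /\ influenced adj t p lam = [set: T].

Definition ceil_div (a b : nat) : nat := (a + b.-1) %/ b.

From mathcomp Require Import all_boot.
From mathcomp Require Import zify.

Set Implicit Arguments.
Unset Strict Implicit.
Unset Printing Implicit Defensive.

(* With threshold 1 everywhere, the nodes influenced after l rounds are exactly
   those within distance l of a node with p v = 1, the "seeds". On a path a ball
   of radius lam has at most 2 lam + 1 nodes, so at least ceil(n / (2 lam + 1))
   seeds are needed; seeds at positions j (2 lam + 1) + lam (capped at n - 1)
   for j < ceil(n / (2 lam + 1)) suffice. *)

Lemma influencedS_unit (T : finType) (adj : rel T) (p : T -> nat) l v :
  (forall v, p v <= 1) ->
  (v \in influenced adj (fun _ => 1) p l.+1) =
  [|| v \in influenced adj (fun _ => 1) p l, p v == 1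
    | [exists u, adj v u && (u \in influenced adj (fun _ => 1) p l)]].
Proof.
move=> p_le1; rewrite /= !inE; congr (_ || _).
have [pv0 | pv1] : p v = 0 \/ p v = 1 by have := p_le1 v; lia.
- rewrite pv0 subn0 card_gt0; apply/set0Pn/existsP => -[u].
    by rewrite !inE => huv; exists u.
  by move=> huv; exists u; rewrite !inE.
- by rewrite pv1 subnn.
Qed.

Lemma cost_unit (T : finType) (q : {ffun T -> nat}) :
  (forall v, q v <= 1) -> cost q = #|[set v | q v == 1]|.
Proof.
move=> q_le1; rewrite /cost -sum1_card [RHS]big_mkcond /=.
apply: eq_bigr => v _; rewrite inE.
by have := q_le1 v; case: (q v) => [|[|]].
Qed.

Lemma card_le_cover (T U : finType) (S : {set U}) (B : U -> {set T}) m :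
  (forall v, exists2 u, u \in S & v \in B u) -> (forall u, #|B u| <= m) ->
  #|T| <= #|S| * m.
Proof.
move=> cover cardB.
have cover_sum v : 1 <= \sum_(u in S) (v \in B u).
  have [u uS vBu] := cover v.
  by rewrite (bigD1 u) //= vBu.
rewrite -[#|T|]sum1_card (@leq_trans (\sum_(v in T) \sum_(u in S) (v \in B u))) //.
  by apply: leq_sum => v _; apply: cover_sum.
rewrite exchange_big -sum_nat_const; apply: leq_sum => u _.
by rewrite (leq_trans _ (cardB u)) // -sum1_card [X in _ <= X]big_mkcond.
Qed.

Lemma leq_ceil_divLR a m s : 0 < m -> (ceil_div a m <= s) = (a <= s * m).
Proof. by move=> m_gt0; rewrite /ceil_div -ltnS ltn_divLR // mulSn; lia. Qed.

Definition path_dist (a b : nat) : nat := (a - b) + (b - a).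

Lemma card_path_ball n (u : 'I_n) r :
  #|[set v : 'I_n | path_dist u v <= r]| <= 2 * r + 1.
Proof.
set B := [set v : 'I_n | _].
rewrite cardE -(size_map val) -(size_iota (u - r) (2 * r + 1)).
apply: uniq_leq_size; first by rewrite (map_inj_uniq val_inj) enum_uniq.
move=> x /mapP[v]; rewrite mem_enum inE /path_dist => uv ->.
by rewrite mem_iota -[val v]/(nat_of_ord v); lia.
Qed.

Lemma path_distS n (u v : 'I_n) l :
  (path_dist u v <= l.+1) =
  (path_dist u v <= l) || [exists w, path_adj v w && (path_dist u w <= l)].
Proof.
rewrite /path_dist; apply/idP/orP => [uv | [uv | /existsP[w /andP[]]]].
- have [|uvS] := leqP (path_dist u v) l; first by left.
  right; apply/existsP; rewrite /path_dist in uvS.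
  have [uv' | vu] := ltnP u v.
  + have v1 : v.-1 < n by have := ltn_ord v; lia.
    by exists (Ordinal v1); rewrite /path_adj /=; lia.
  + have v1 : v.+1 < n by have := ltn_ord u; lia.
    by exists (Ordinal v1); rewrite /path_adj /=; lia.
- lia.
- by rewrite /path_adj; lia.
Qed.

Lemma influenced_path_unit n (p : 'I_n -> nat) l v :
  (forall v, p v <= 1) ->
  (v \in influenced (@path_adj n) (fun _ => 1) p l) =
  [exists u, (p u == 1) && (path_dist u v <= l)].
Proof.
move=> p_le1; elim: l v => [|l IH] v.
  rewrite /= inE; apply/idP/existsP => [pv | [u /andP[pu uv]]].
    by exists v; rewrite pv /path_dist !subnn.
  by have -> : v = u by apply: ord_inj; rewrite /path_dist in uv; lia.
rewrite influencedS_unit // IH; apply/idP/existsP.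
- case/or3P => [/existsP[u /andP[pu uv]] | pv | /existsP[w /andP[vw]]].
  + by exists u; rewrite pu path_distS uv.
  + by exists v; rewrite pv /path_dist subnn.
  + rewrite IH => /existsP[u /andP[pu uw]]; exists u; rewrite pu path_distS.
    by apply/orP; right; apply/existsP; exists w; rewrite vw.
- move=> [u /andP[pu]]; rewrite path_distS => /orP[uv | /existsP[w /andP[vw uw]]].
    by apply/or3P; constructor 1; apply/existsP; exists u; rewrite pu.
  apply/or3P; constructor 3; apply/existsP; exists w; rewrite vw IH.
  by apply/existsP; exists u; rewrite pu.
Qed.

Section PathCentres.

Variables n r : nat.

Local Notation m := (2 * r + 1).
Local Notation k := (ceil_div n.+1 m).

Let m_gt0 : 0 < m. Proof. by rewrite addn1. Qed.

Let nodes_le_cover : n.+1 <= k * m.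
Proof. by rewrite -leq_ceil_divLR. Qed.

Let cover_pred_lt_nodes : k.-1 * m < n.+1.
Proof.
have k_gt0 : 0 < k by rewrite ltnNge leq_ceil_divLR.
by rewrite ltnNge -leq_ceil_divLR // -ltnS prednK ?ltnn.
Qed.

Definition path_centre (j : 'I_k) : 'I_n.+1 := inord (minn (j * m + r) n).

Lemma val_path_centre j : path_centre j = minn (j * m + r) n :> nat.
Proof. by rewrite inordK //; lia. Qed.

Lemma path_centre_lt (i j : 'I_k) : i < j -> path_centre i < path_centre j.
Proof.
move=> ij; rewrite !val_path_centre.
have gap : i * m + m <= j * m by rewrite -mulSnr leq_mul2r ij orbT.
have j_last : j * m <= k.-1 * m by rewrite leq_mul2r -ltnS prednK ?ltn_ord ?orbT //; lia.
lia.
Qed.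

Lemma path_centre_inj : injective path_centre.
Proof.
move=> i j eq_ij; apply: val_inj.
by have [/path_centre_lt | /path_centre_lt | ] := ltngtP i j; rewrite ?eq_ij ?ltnn.
Qed.

Definition path_centres : {set 'I_n.+1} := [set path_centre j | j : 'I_k].

Definition centres_incentive : {ffun 'I_n.+1 -> nat} :=
  [ffun v => nat_of_bool (v \in path_centres)].

Lemma centres_incentive_le1 v : centres_incentive v <= 1.
Proof. by rewrite ffunE; case: (_ \in _). Qed.

Lemma cost_centres_incentive : cost centres_incentive = k.
Proof.
rewrite (cost_unit centres_incentive_le1).
have -> : [set v | centres_incentive v == 1] = path_centres.
  by apply/setP => v; rewrite inE ffunE; case: (_ \in _).
by rewrite card_imset ?card_ord //; apply: path_centre_inj.
Qed.

Lemma centres_incentive_solution :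
  TBI_solution (@path_adj n.+1) (fun _ => 1) r centres_incentive.
Proof.
split; first exact: centres_incentive_le1.
apply/setP => v; rewrite inE influenced_path_unit; last exact: centres_incentive_le1.
have vk : v %/ m < k.
  by rewrite ltn_divLR //; have := ltn_ord v; lia.
apply/existsP; exists (path_centre (Ordinal vk)).
rewrite ffunE imset_f //= /path_dist val_path_centre /=.
have := divn_eq v m; have := ltn_mod v m; have := ltn_ord v; lia.
Qed.

End PathCentres.

Theorem lemma5 (n lam : nat) : 0 < n -> 0 < lam ->
  let t : 'I_n -> nat := fun _ => 1 in
  (exists p : {ffun 'I_n -> nat},
      TBI_solution (@path_adj n) t lam p /\ cost p = ceil_div n (2 * lam + 1)) /\
  (forall p : {ffun 'I_n -> nat},
      TBI_solution (@path_adj n) t lam p -> ceil_div n (2 * lam + 1) <= cost p).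
Proof.
case: n => [//|n] _ _ t; split.
  exists (centres_incentive n lam); split; first exact: centres_incentive_solution.
  exact: cost_centres_incentive.
move=> p [p_le1 influenced_all].
rewrite (cost_unit p_le1) leq_ceil_divLR; last by rewrite addn1.
rewrite -[X in X <= _]card_ord.
apply: card_le_cover (fun u => card_path_ball u lam) => v.
have : v \in influenced (@path_adj n.+1) t p lam by rewrite influenced_all inE.
rewrite influenced_path_unit // => /existsP[u /andP[pu uv]].
by exists u; rewrite inE.
Qed.
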